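(* Assume (A0). Let $(s,t) \in \Delta_J$ and $f \in Y_1$. Then on $\Omega$, for every $\epsilon\in(0,1]$, \[ V_\epsilon(s,t)f=f+\int_s^t V_\epsilon(s,u)A_{x (u^{1/\epsilon,s})}(u)f\, du+\sum_{k=1}^{N_s (t^{1/\epsilon,s})} V_\epsilon(s,T_k^{\epsilon,s}(s)^-) [D^\epsilon(x_{k-1}(s),x_k(s))-I]f , \] where $V_\epsilon(s,r^-)f=\lim_{u\uparrow r}V_\epsilon(s,u)f$.
   Context: Banach spaces: $(Y,\|\cdot\|)$ real separable, $(Y_1,\|\cdot\|_{Y_1})$ real separable continuously embedded in $Y$. $J$ is $\mathbb{R}^+$ or $[0,T_\infty]$, $\Delta_J=\{(s,t)\in J^2:s\le t\}$, $J(s)=\{t\in J:t\ge s\}$. An inhomogeneous $Y$-semigroup is $\Gamma:\Delta_J\to\mathcal B(Y)$ with $\Gamma(t,t)=I$, $\Gamma(s,r)\Gamma(r,t)=\Gamma(s,t)$; its generator $A_\Gamma(t)f$ is the common value of $\lim_{h\downarrow0}h^{-1}(\Gamma(t,t+h)-I)f$ and $\lim_{h\downarrow0}h^{-1}(\Gamma(t-h,t)-I)f$ on the set $\mathcal D(A_\Gamma(t))$ where both exist and agree, $\mathcal D(A_\Gamma)=\bigcap_t\mathcal D(A_\Gamma(t))$. $\Gamma$ is regular if $Y_1\subseteq\mathcal D(A_\Gamma)$, $\Gamma(s,t)Y_1\subseteq Y_1$ and $u\mapsto\Gamma(u,t)f$ is $\|\cdot\|_{Y_1}$-continuous for $f\in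 Y_1$, $u\mapsto\Gamma(s,u)f$ is $Y$-continuous for $f\in Y$, and $u\mapsto\Gamma(s,u)A_\Gamma(u)f$ is Bochner integrable on $[s,t]$ for $f\in Y_1$. Probabilistic setting: $(\Omega,\mathcal F,\mathbb P)$ complete; $X$ finite; $(x_n,T_n)_{n\ge0}$ a Markov renewal process ($x_n\in X$, $T_0=0<T_1<\dots$) with semi-Markov kernel $Q$; $N(t)=\sup\{n:T_n\le t\}$ (finite everywhere after restricting $\Omega$ to a full-measure event); $x(t)=x_{N(t)}$; $N_s(t)=N(t)-N(s)$, $T_0(s)=s$, $T_n(s)=T_{N(s)+n}$ ($n\ge1$), $x_n(s)=x(T_n(s))$. $(\Gamma_x)_{x\in X}$ are inhomogeneous $Y$-semigroups with generators $A_x$ (jointly measurable in $(r,t,x,f)$). $(D^\epsilon(x,y))_{x,y\in X,\epsilon\in(0,1]}\subseteq\mathcal B(Y)$ with $(x,y,f)\mapsto D^\epsilon(x,y)f$ measurable, and $D^0(x,y):=I$. $\mathcal D(D_1)$ is the set of $f\in Y$ such that for all $\epsilon\in[0,1]$, $x,y$, the derivative $D^\epsilon_1(x,y)f:=\lim_{h\to0,\epsilon+h\in[0,1]}h^{-1}(D^{\epsilon+h}(x,y)f-D^\epsilon(x,y)f)$ exists in $Y$; $\mathcal D(D_2)$, $D^\epsilon_2$ likewise for the second derivative in $\epsilon$. For $f\in\bigcap_x\mathcal D(A_x)$ with $A_x(t)f\in Y_1$ for all $t$, $A'_x(t)f$ denotes the $\|\cdot\|_{Y_1}$-limit of $h^{-1}(A_x(t+h)f-A_x(t)f)$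 and $\mathcal D(A'_x)$ the set where it exists in $Y_1$ for all $t$. (A0) is the following set of assumptions: (a) $Y_1\subseteq\mathcal D(D_1)$; (b) every $\Gamma_x$ is regular; (c) for every $x$ and $f\in Y_1$, $t\mapsto A_x(t)f$ is continuous into $Y$; (d) there is $\bar\tau>0$ with $Q(x,y,(\bar\tau,\infty))=0$ for all $x,y$; (e) all $\Gamma_x(s,t)$ and $D^\epsilon(x,y)$ have $\mathcal B(Y)$-norm at most $1$; (f) $A_x(t)\in\mathcal B(Y_1,Y)$ and $\sup_{u\in J}\|A_x(u)\|_{\mathcal B(Y_1,Y)}<\infty$ for all $x$; (g) $\sup_{u,x}\|A'_x(u)f\|<\infty$ and $\sup_{u,x}\|A_x(u)f\|_{Y_1}<\infty$ for all $f\in\bigcap_x\mathcal D(A'_x)$; (h) $\sup_{\epsilon\in[0,1],x,y}\|D^\epsilon_1(x,y)f\|<\infty$ for $f\in\mathcal D(D_1)$; (i) $\sup_{\epsilon\in[0,1],x,y}\|D^\epsilon_2(x,y)f\|<\infty$ for $f\in\mathcal D(D_2)$. With $t^{\epsilon,s}=s+\epsilon(t-s)$ (so $t^{1/\epsilon,s}=s+(t-s)/\epsilon$) and $T^{\epsilon,s}_k(s)=s+\epsilon(T_k(s)-s)$, $V_\epsilon(s,t)=\big[\prod_{k=1}^{N_s(t^{1/\epsilon,s})}\Gamma_{x_{k-1}(s)}(T^{\epsilon,s}_{k-1}(s),T^{\epsilon,s}_k(s))D^\epsilon(x_{k-1}(s),x_k(s))\big]\Gamma_{x(t^{1/\epsilon,s})}(T^{\epsilon,s}_{N_s(t^{1/\epsilon,s})}(s),t)$,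 product ordered left to right, empty product $I$. *)

From Stdlib Require Import Reals List.
From Coquelicot Require Import Coquelicot.
Open Scope R_scope.

Section Defs.
Context {Y Y1 : CompleteNormedModule R_AbsRing}.

Definition separable (Z : NormedModule R_AbsRing) : Prop :=
  exists d : nat -> Z, forall z eps, 0 < eps -> exists n, norm (minus z (d n)) < eps.

Definition cont_embedding (iota : Y1 -> Y) : Prop :=
  is_linear iota /\ (forall f g, iota f = iota g -> f = g).

Definition time_domain (J : R -> Prop) : Prop :=
  (forall t, J t <-> 0 <= t) \/
  (exists Tinf, 0 < Tinf /\ forall t, J t <-> 0 <= t <= Tinf).

Definition inhom_semigroup (J : R -> Prop) (G : R -> R -> Y -> Y) : Prop :=
  (forall s t, J s -> J t -> s <= t -> is_linear (G s t)) /\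
  (forall t f, J t -> G t t f = f) /\
  (forall s r t f, J s -> J r -> J t -> s <= r -> r <= t -> G s r (G r t f) = G s t f).

Definition gen_lim (J : R -> Prop) (G : R -> R -> Y -> Y) (t : R) (f g : Y) : Prop :=
  filterlim (fun h => scal (/ h) (minus (G t (t + h) f) f))
    (within (fun h => J (t + h)) (at_right 0)) (locally g) /\
  filterlim (fun h => scal (/ h) (minus (G (t - h) t f) f))
    (within (fun h => J (t - h)) (at_right 0)) (locally g).

Definition in_gen_dom J G t f : Prop := exists g, gen_lim J G t f g.

Definition is_generator J G (A : R -> Y -> Y) : Prop :=
  forall t f g, J t -> gen_lim J G t f g -> A t f = g.

Definition regular (J : R -> Prop) (iota : Y1 -> Y) (G : R -> R -> Y -> Y)
  (A : R -> Y -> Y) : Prop :=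
  (forall t f, J t -> in_gen_dom J G t (iota f)) /\
  (forall s t f, J s -> J t -> s <= t -> exists g, G s t (iota f) = iota g) /\
  (forall t (f : Y1), J t -> exists phi : R -> Y1,
      (forall u, J u -> u <= t -> iota (phi u) = G u t (iota f)) /\
      (forall u, J u -> u <= t ->
         filterlim phi (within (fun v => J v /\ v <= t) (locally u)) (locally (phi u)))) /\
  (forall s (f : Y) u, J s -> J u -> s <= u ->
      filterlim (fun v => G s v f) (within (fun v => J v /\ s <= v) (locally u))
        (locally (G s u f))) /\
  (forall s t f, J s -> J t -> s <= t -> ex_RInt (fun u => G s u (A u (iota f))) s t).

Definition deriv01 (phi : R -> Y) (eps : R) (g : Y) : Prop :=
  filterlim (fun h => scal (/ h) (minus (phi (eps + h)) (phi eps)))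
    (within (fun h => 0 <= eps + h <= 1) (locally' 0)) (locally g).

Definition inD1 {X : Type} (D : R -> X -> X -> Y -> Y) (f : Y) : Prop :=
  forall eps x y, 0 <= eps <= 1 -> exists g, deriv01 (fun e => D e x y f) eps g.

Definition inD2 {X : Type} (D : R -> X -> X -> Y -> Y) (f : Y) : Prop :=
  inD1 D f /\ forall x y, exists d1 : R -> Y,
    (forall eps, 0 <= eps <= 1 -> deriv01 (fun e => D e x y f) eps (d1 eps)) /\
    (forall eps, 0 <= eps <= 1 -> exists g, deriv01 d1 eps g).

Definition derivJ1 (J : R -> Prop) (a : R -> Y1) (t : R) (a' : Y1) : Prop :=
  filterlim (fun h => scal (/ h) (minus (a (t + h)) (a t)))
    (within (fun h => J (t + h)) (locally' 0)) (locally a').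

Definition inDA' (J : R -> Prop) (iota : Y1 -> Y) G (A : R -> Y -> Y) (f : Y) : Prop :=
  exists a : R -> Y1,
    (forall t, J t -> in_gen_dom J G t f /\ A t f = iota (a t)) /\
    (forall t, J t -> exists a', derivJ1 J a t a').

(** paths of the Markov renewal process: T_0 = 0 < T_1 < ..., and
    N(r) = sup {n | T_n <= r} (finite) *)
Definition renewal_path (T : nat -> R) (N : R -> nat) : Prop :=
  T 0%nat = 0 /\ (forall n, T n < T (S n)) /\
  (forall r, 0 <= r -> T (N r) <= r /\ r < T (S (N r))).

Definition A0 {X : Type} (J : R -> Prop) (iota : Y1 -> Y)
  (G : X -> R -> R -> Y -> Y) (A : X -> R -> Y -> Y) (D : R -> X -> X -> Y -> Y)
  (T : nat -> R) : Prop :=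
  (forall f, inD1 D (iota f)) /\
  (forall x, regular J iota (G x) (A x)) /\
  (forall x f u, J u ->
               filterlim (fun v => A x v (iota f)) (within J (locally u))
                 (locally (A x u (iota f)))) /\
  (* (d) pathwise *) (exists taubar, 0 < taubar /\ forall n, T (S n) - T n <= taubar) /\
  (forall x s t f, J s -> J t -> s <= t -> norm (G x s t f) <= norm f) /\
            (forall eps x y f, 0 < eps <= 1 -> norm (D eps x y f) <= norm f) /\
  (forall x u, J u -> is_linear (fun f : Y1 => A x u (iota f))) /\
            (forall x, exists M, forall u (f : Y1), J u -> norm (A x u (iota f)) <= M * norm f) /\
  (forall f, (forall x, inDA' J iota (G x) (A x) f) ->
               exists M, forall x u (a : R -> Y1) a', J u ->
                 (forall t, J t -> A x t f = iota (a t)) -> derivJ1 J a u a' ->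
                 norm (iota a') <= M /\ norm (a u) <= M) /\
  (forall f, inD1 D f -> exists M, forall eps x y g, 0 <= eps <= 1 ->
               deriv01 (fun e => D e x y f) eps g -> norm g <= M) /\
  (forall f, inD2 D f -> exists M, forall x y (d1 : R -> Y) eps g,
               (forall e, 0 <= e <= 1 -> deriv01 (fun e' => D e' x y f) e (d1 e)) ->
               0 <= eps <= 1 -> deriv01 d1 eps g -> norm g <= M).

Definition Tk (T : nat -> R) (N : R -> nat) (s : R) (k : nat) : R :=
  match k with O => s | _ => T (N s + k)%nat end.
Definition xpath {X : Type} (xs : nat -> X) (N : R -> nat) (r : R) : X := xs (N r).
Definition xk {X : Type} (xs : nat -> X) (T : nat -> R) (N : R -> nat) (s : R) (k : nat) : X :=
  xpath xs N (Tk T N s k).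
Definition Teps (eps s r : R) : R := s + eps * (r - s).
Definition Nst (N : R -> nat) (s t : R) : nat := (N t - N s)%nat.

Fixpoint Vprod {X : Type} (G : X -> R -> R -> Y -> Y) (D : R -> X -> X -> Y -> Y)
  (xs : nat -> X) (T : nat -> R) (N : R -> nat) (eps s : R)
  (k m : nat) (tail : Y -> Y) (f : Y) : Y :=
  match m with
  | O => tail f
  | S m' => G (xk xs T N s k) (Teps eps s (Tk T N s k)) (Teps eps s (Tk T N s (S k)))
             (D eps (xk xs T N s k) (xk xs T N s (S k))
                (Vprod G D xs T N eps s (S k) m' tail f))
  end.

Definition Veps {X : Type} (G : X -> R -> R -> Y -> Y) (D : R -> X -> X -> Y -> Y)
  (xs : nat -> X) (T : nat -> R) (N : R -> nat) (eps s t : R) (f : Y) : Y :=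
  let n := Nst N s (Teps (/ eps) s t) in
  Vprod G D xs T N eps s 0 n
    (G (xpath xs N (Teps (/ eps) s t)) (Teps eps s (Tk T N s n)) t) f.

End Defs.

From Stdlib Require Import Reals List Lra Lia.
From Coquelicot Require Import Coquelicot.
Open Scope R_scope.

(* Between consecutive rescaled jump times tau_k <= u < tau_(k+1), V_eps(s,u) equals
   P_k G_(x_k)(tau_k,u), where the bounded linear map P_k is the product of the first k
   factors.  Since u |-> G(tau_k,u) f has the continuous derivative G(tau_k,u) A(u) f, the
   fundamental theorem of calculus gives the integral over [tau_k, u].  At tau_(k+1) the
   product acquires the factor D^eps, and the jump of V_eps(s,.) f there is
   P_k G(tau_k,tau_(k+1)) [D^eps - I] f; summing over the intervals telescopes. *)

Lemma minus_plus_l {G : AbelianGroup} (x y z : G) : minus (plus x y) z = plus (minus x z) y.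
Proof.
  unfold minus. rewrite <- !plus_assoc. f_equal. apply plus_comm.
Qed.

Lemma minus_plus_plus {G : AbelianGroup} (a b c d : G) :
  minus (plus a b) (plus c d) = plus (minus a c) (minus b d).
Proof.
  unfold minus. rewrite opp_plus, <- !plus_assoc. f_equal.
  rewrite (plus_comm b), <- !plus_assoc. f_equal. apply plus_comm.
Qed.

Lemma plus_minus_r {G : AbelianGroup} (x y : G) : plus (minus y x) x = y.
Proof. unfold minus. rewrite <- plus_assoc, plus_opp_l. apply plus_zero_r. Qed.

Lemma plus_minus_chain {G : AbelianGroup} (x y z : G) : plus (minus y x) (minus z y) = minus z x.
Proof. rewrite plus_comm. symmetry. apply minus_trans. Qed.

Lemma minus_plus_cancel_r {G : AbelianGroup} (x y z : G) :
  minus (plus x z) (plus y z) = minus x y.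
Proof. rewrite minus_plus_plus, minus_eq_zero. apply plus_zero_r. Qed.

Lemma plus_plus_minus {G : AbelianGroup} (x y z : G) :
  plus x (plus (minus z (plus x y)) y) = z.
Proof. rewrite (plus_comm _ y), plus_assoc, plus_comm. apply plus_minus_r. Qed.

Section Increments.
Context {V : NormedModule R_AbsRing}.

Lemma scal_Rplus_distr (h k : R) (z : V) : scal (h + k) z = plus (scal h z) (scal k z).
Proof. exact (scal_distr_r h k z). Qed.

Lemma minus_scal_factor (h : R) (y z : V) : h <> 0 ->
  minus y (scal h z) = scal h (minus (scal (/ h) y) z).
Proof.
  intros Hh. rewrite (@scal_minus_distr_l R_Ring V), scal_assoc.
  change (mult h (/ h)) with (h * / h). rewrite Rinv_r by exact Hh.
  now rewrite (scal_one y : scal 1 y = y).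
Qed.

Lemma increment_swap (x y l : V) (w v : R) :
  minus (minus x y) (scal (w - v) l) = opp (minus (minus y x) (scal (v - w) l)).
Proof.
  replace (w - v) with (- (v - w)) by ring.
  rewrite (@scal_opp_l R_Ring V), opp_minus. unfold minus at 1 3.
  rewrite opp_opp, <- opp_minus, plus_comm. reflexivity.
Qed.

Lemma increment_diag (x l : V) (v : R) : minus (minus x x) (scal (v - v) l) = zero.
Proof.
  rewrite minus_eq_zero, Rminus_diag, (scal_zero_l (K := R_Ring) l : scal 0 l = zero).
  apply minus_eq_zero.
Qed.

End Increments.

Definition continuous_on_Icc {V : NormedModule R_AbsRing} (a b : R) (psi : R -> V) : Prop :=
  forall v, a <= v <= b -> forall e : posreal, exists d : posreal,
    forall w, a <= w <= b -> Rabs (w - v) < d -> norm (minus (psi w) (psi v)) < e.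

Definition derivative_on_Icc {V : NormedModule R_AbsRing} (a b : R) (phi psi : R -> V) : Prop :=
  forall v, a <= v <= b -> forall e : posreal, exists d : posreal,
    forall w, a <= w <= b -> Rabs (w - v) < d ->
      norm (minus (minus (phi w) (phi v)) (scal (w - v) (psi v))) <= e * Rabs (w - v).

Section LinearImage.
Context {V W : NormedModule R_AbsRing}.

Lemma linear_norm_small (P : V -> W) (e : posreal) : is_linear P ->
  exists d : posreal, forall y, norm y < d -> norm (P y) < e.
Proof.
  intros HP. destruct (linear_norm P HP) as [M [HM HPM]].
  assert (Hd : 0 < e / M) by (apply Rdiv_lt_0_compat; [apply cond_pos | exact HM]).
  exists (mkposreal _ Hd). intros y Hy. simpl in Hy.
  eapply Rle_lt_trans; [apply HPM |].
  replace (pos e) with (M * (e / M)) by (field; lra).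
  apply Rmult_lt_compat_l; assumption.
Qed.

Lemma continuous_on_Icc_linear (P : V -> W) a b psi : is_linear P ->
  continuous_on_Icc a b psi -> continuous_on_Icc a b (fun v => P (psi v)).
Proof.
  intros HP Hpsi v Hv e. destruct (linear_norm_small P e HP) as [e' He'].
  destruct (Hpsi v Hv e') as [d Hd]. exists d. intros w Hw Hwv.
  rewrite <- linear_minus by exact HP. apply He', Hd; assumption.
Qed.

Lemma derivative_on_Icc_linear (P : V -> W) a b phi psi : is_linear P ->
  derivative_on_Icc a b phi psi -> derivative_on_Icc a b (fun v => P (phi v)) (fun v => P (psi v)).
Proof.
  intros HP Hphi v Hv e. destruct (linear_norm P HP) as [M [HM HPM]].
  assert (He' : 0 < e / M) by (apply Rdiv_lt_0_compat; [apply cond_pos | exact HM]).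
  destruct (Hphi v Hv (mkposreal _ He')) as [d Hd]. exists d. intros w Hw Hwv.
  rewrite <- (linear_scal P), <- !(linear_minus P) by exact HP.
  eapply Rle_trans; [apply HPM |].
  replace (e * Rabs (w - v)) with (M * (e / M * Rabs (w - v))) by (field; lra).
  apply Rmult_le_compat_l; [lra | apply Hd; assumption].
Qed.

End LinearImage.

Lemma is_derive_of_estimate {V : NormedModule R_AbsRing} (phi : R -> V) (x : R) (l : V) :
  (forall e : posreal, exists d : posreal, forall y, Rabs (y - x) < d ->
     norm (minus (minus (phi y) (phi x)) (scal (y - x) l)) <= e * Rabs (y - x)) ->
  is_derive phi x l.
Proof.
  intros H. split; [apply is_linear_scal_l |].
  intros y Hy. apply (@is_filter_lim_locally_unique _ R_NormedModule) in Hy. subst y.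
  intros e. destruct (H e) as [d Hd]. exists d. intros y Hy. apply Hd, Hy.
Qed.

Definition clamp (a b v : R) : R := Rmax a (Rmin b v).

Lemma clamp_id a b v : a <= v <= b -> clamp a b v = v.
Proof.
  intros Hv. unfold clamp, Rmax, Rmin. destruct (Rle_dec b v); destruct (Rle_dec a _); lra.
Qed.

Lemma clamp_spec a b x y : a <= b -> a <= x <= b ->
  a <= clamp a b y <= b /\ Rabs (clamp a b y - x) <= Rabs (y - x) /\
  Rabs (y - clamp a b y) <= Rabs (y - x).
Proof.
  intros Hab Hx. unfold clamp, Rmax, Rmin.
  destruct (Rle_dec b y); destruct (Rle_dec a _);
  repeat split; unfold Rabs; repeat destruct Rcase_abs; lra.
Qed.

(* phi continued affinely, with slope psi at the endpoints, outside [a, b], so that the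
   two-sided FTC of Coquelicot applies to it. *)
Definition clamp_extension {V : NormedModule R_AbsRing} (a b : R) (phi psi : R -> V) (v : R) : V :=
  plus (phi (clamp a b v)) (scal (v - clamp a b v) (psi (clamp a b v))).

Lemma clamp_extension_id {V : NormedModule R_AbsRing} a b (phi psi : R -> V) v : a <= v <= b ->
  clamp_extension a b phi psi v = phi v.
Proof.
  intros Hv. unfold clamp_extension. rewrite clamp_id, Rminus_diag by exact Hv.
  rewrite (scal_zero_l (K := R_Ring) (psi v) : scal 0 (psi v) = zero). apply plus_zero_r.
Qed.

Lemma is_derive_clamp_extension {V : NormedModule R_AbsRing} (phi psi : R -> V) a b x :
  a <= b -> a <= x <= b -> continuous_on_Icc a b psi -> derivative_on_Icc a b phi psi ->
  is_derive (clamp_extension a b phi psi) x (psi x).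
Proof.
  intros Hab Hx Hc Hd. apply is_derive_of_estimate. intros e.
  assert (He2 : 0 < e / 2) by (destruct e; simpl; lra).
  destruct (Hc x Hx (mkposreal _ He2)) as [d1 Hd1].
  destruct (Hd x Hx (mkposreal _ He2)) as [d2 Hd2].
  assert (Hd12 : 0 < Rmin d1 d2) by (apply Rmin_glb_lt; apply cond_pos).
  exists (mkposreal _ Hd12). intros y Hy. simpl in Hy.
  pose proof (Rmin_l d1 d2). pose proof (Rmin_r d1 d2).
  destruct (clamp_spec a b x y Hab Hx) as [Hcy [Hcx Hyc]].
  rewrite (clamp_extension_id a b phi psi x Hx). unfold clamp_extension.
  set (c := clamp a b y) in *.
  replace (y - x) with ((c - x) + (y - c)) at 1 by ring.
  rewrite scal_Rplus_distr, (@minus_plus_l V), (@minus_plus_plus V),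
    <- (@scal_minus_distr_l R_Ring V).
  eapply Rle_trans; [apply (@norm_triangle R_AbsRing V) |].
  eapply Rle_trans; [apply Rplus_le_compat; [apply (Hd2 c) | apply (@norm_scal R_AbsRing V)] |];
    [exact Hcy | simpl; lra |].
  change (abs (y - c)) with (Rabs (y - c)).
  assert (norm (minus (psi c) (psi x)) <= e / 2) by (left; apply (Hd1 c); [exact Hcy | simpl; lra]).
  assert (Rabs (y - c) * norm (minus (psi c) (psi x)) <= Rabs (y - x) * (e / 2))
    by (apply Rmult_le_compat; auto using Rabs_pos, norm_ge_0).
  assert (e / 2 * Rabs (c - x) <= e / 2 * Rabs (y - x)) by (apply Rmult_le_compat_l; lra).
  assert (Hsum : e / 2 * Rabs (c - x) + Rabs (y - c) * norm (minus (psi c) (psi x))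
                 <= e * Rabs (y - x)) by lra.
  exact Hsum.
Qed.

Lemma is_RInt_derivative_on_Icc {V : CompleteNormedModule R_AbsRing} (phi psi : R -> V) a b :
  a <= b -> continuous_on_Icc a b psi -> derivative_on_Icc a b phi psi ->
  is_RInt psi a b (minus (phi b) (phi a)).
Proof.
  intros Hab Hc Hd.
  apply is_RInt_ext with (fun v => psi (clamp a b v)).
  { intros v Hv. rewrite Rmin_left, Rmax_right in Hv by lra. now rewrite clamp_id by lra. }
  rewrite <- (clamp_extension_id a b phi psi b), <- (clamp_extension_id a b phi psi a) by lra.
  apply is_RInt_derive; intros x Hx; rewrite Rmin_left, Rmax_right in Hx by lra.
  - rewrite (clamp_id a b x Hx). now apply is_derive_clamp_extension.
  - unfold continuous. rewrite (clamp_id a b x Hx).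
    apply (proj2 (filterlim_locally_ball_norm (K := R_AbsRing) (U := V) _ _)). intros e.
    destruct (Hc x Hx e) as [d Hd1]. exists d. intros y Hy.
    destruct (clamp_spec a b x y Hab Hx) as [Hcy [Hcx _]].
    apply (Hd1 (clamp a b y) Hcy). change (Rabs (y - x) < d) in Hy. lra.
Qed.

Lemma filterlim_at_right_norm {V : NormedModule R_AbsRing} (q : R -> V) (P : R -> Prop) l :
  filterlim q (within P (at_right 0)) (locally l) ->
  forall e : posreal, exists d : posreal, forall h, 0 < h < d -> P h -> norm (minus (q h) l) < e.
Proof.
  intros H e. apply (filterlim_locally_ball_norm (K := R_AbsRing)) with (eps := e) in H.
  destruct H as [d Hd]. exists d. intros h Hh HP. apply Hd; [| lra | exact HP].
  change (Rabs (h - 0) < d). rewrite Rminus_0_r, Rabs_right; lra.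
Qed.

Lemma filterlim_within_norm {V : NormedModule R_AbsRing} (q : R -> V) (P : R -> Prop) u l :
  filterlim q (within P (locally u)) (locally l) ->
  forall e : posreal, exists d : posreal,
    forall w, Rabs (w - u) < d -> P w -> norm (minus (q w) l) < e.
Proof.
  intros H e. apply (filterlim_locally_ball_norm (K := R_AbsRing)) with (eps := e) in H.
  destruct H as [d Hd]. exists d. intros w Hw HP. apply Hd; assumption.
Qed.

Section SemigroupOrbit.
Context {Y : CompleteNormedModule R_AbsRing} (J : R -> Prop) (G : R -> R -> Y -> Y)
  (A : R -> Y -> Y) (r b : R) (f : Y).
Hypothesis G_semigroup : inhom_semigroup J G.
Hypothesis G_contraction : forall s t y, J s -> J t -> s <= t -> norm (G s t y) <= norm y.
Hypothesis J_rb : forall u, r <= u <= b -> J u.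
Hypothesis G_continuous : forall y u, r <= u <= b ->
  filterlim (fun v => G r v y) (within (fun v => J v /\ r <= v) (locally u)) (locally (G r u y)).

Lemma semigroup_linear a c : r <= a -> a <= c -> c <= b -> is_linear (G a c).
Proof. intros. apply (proj1 G_semigroup); try apply J_rb; lra. Qed.

Lemma orbit_increment a c z : r <= a -> a <= c -> c <= b ->
  minus (minus (G r c f) (G r a f)) (scal (c - a) (G r a z)) =
  G r a (minus (minus (G a c f) f) (scal (c - a) z)).
Proof.
  intros Hra Hac Hcb. pose proof (semigroup_linear r a ltac:(lra) Hra ltac:(lra)) as Hlin.
  rewrite !(linear_minus (G r a)), (linear_scal (G r a)) by exact Hlin.
  rewrite (proj2 (proj2 G_semigroup)) by (try apply J_rb; lra). reflexivity.
Qed.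

Lemma orbit_generator_continuous :
  (forall u, r <= u <= b -> filterlim (fun v => A v f) (within J (locally u)) (locally (A u f))) ->
  continuous_on_Icc r b (fun v => G r v (A v f)).
Proof.
  intros A_continuous v Hv e.
  assert (He2 : 0 < e / 2) by (destruct e; simpl; lra).
  destruct (filterlim_within_norm _ _ _ _ (A_continuous v Hv) (mkposreal _ He2)) as [d1 Hd1].
  destruct (filterlim_within_norm _ _ _ _ (G_continuous (A v f) v Hv) (mkposreal _ He2))
    as [d2 Hd2].
  assert (Hd : 0 < Rmin d1 d2) by (apply Rmin_glb_lt; apply cond_pos).
  exists (mkposreal _ Hd). intros w Hw Hwv. simpl in Hwv.
  pose proof (Rmin_l d1 d2). pose proof (Rmin_r d1 d2).
  rewrite (minus_trans (G r w (A v f))), <- (linear_minus (G r w))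
    by (apply semigroup_linear; lra).
  eapply Rle_lt_trans; [apply (@norm_triangle R_AbsRing Y) |].
  replace (pos e) with (e / 2 + e / 2) by field.
  apply Rplus_lt_compat.
  - eapply Rle_lt_trans; [apply G_contraction; try apply J_rb; lra |].
    apply (Hd1 w); [lra | apply J_rb; lra].
  - apply (Hd2 w); [lra | split; [apply J_rb |]; lra].
Qed.

Lemma orbit_right_estimate v : r <= v <= b -> gen_lim J G v f (A v f) ->
  forall e : posreal, exists d : posreal, forall w, v < w <= b -> w - v < d ->
    norm (minus (minus (G r w f) (G r v f)) (scal (w - v) (G r v (A v f)))) <= e * (w - v).
Proof.
  intros Hv [Hright _] e.
  destruct (filterlim_at_right_norm _ _ _ Hright e) as [d Hd].
  exists d. intros w Hw Hwv.
  rewrite orbit_increment by lra.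
  eapply Rle_trans; [apply G_contraction; try apply J_rb; lra |].
  rewrite (@minus_scal_factor Y (w - v)) by lra.
  eapply Rle_trans; [apply (@norm_scal R_AbsRing Y) |].
  change (abs (w - v)) with (Rabs (w - v)). rewrite Rabs_right by lra.
  rewrite (Rmult_comm e). apply Rmult_le_compat_l; [lra |].
  left. pose proof (Hd (w - v)) as Hq. replace (v + (w - v)) with w in Hq by ring.
  apply Hq; [lra | apply J_rb; lra].
Qed.

(* The increment is expanded at the base point w, which costs comparing G r w (A v f) with
   G r v (A v f): this is where the continuity of G r . enters. *)
Lemma orbit_left_estimate v : r <= v <= b -> gen_lim J G v f (A v f) ->
  forall e : posreal, exists d : posreal, forall w, r <= w < v -> v - w < d ->
    norm (minus (minus (G r v f) (G r w f)) (scal (v - w) (G r v (A v f)))) <= e * (v - w).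
Proof.
  intros Hv [_ Hleft] e.
  assert (He2 : 0 < e / 2) by (destruct e; simpl; lra).
  destruct (filterlim_at_right_norm _ _ _ Hleft (mkposreal _ He2)) as [d1 Hd1].
  destruct (filterlim_within_norm _ _ _ _ (G_continuous (A v f) v Hv) (mkposreal _ He2))
    as [d2 Hd2].
  assert (Hd : 0 < Rmin d1 d2) by (apply Rmin_glb_lt; apply cond_pos).
  exists (mkposreal _ Hd). intros w Hw Hwv. simpl in Hwv.
  pose proof (Rmin_l d1 d2). pose proof (Rmin_r d1 d2).
  rewrite (minus_trans (scal (v - w) (G r w (A v f)))), orbit_increment by lra.
  rewrite <- (@scal_minus_distr_l R_Ring Y).
  eapply Rle_trans; [apply (@norm_triangle R_AbsRing Y) |].
  replace (e * (v - w)) with (e / 2 * (v - w) + (v - w) * (e / 2)) by field.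
  apply Rplus_le_compat.
  - eapply Rle_trans; [apply G_contraction; try apply J_rb; lra |].
    rewrite (@minus_scal_factor Y (v - w)) by lra.
    eapply Rle_trans; [apply (@norm_scal R_AbsRing Y) |].
    change (abs (v - w)) with (Rabs (v - w)). rewrite Rabs_right by lra.
    rewrite (Rmult_comm (e / 2)). apply Rmult_le_compat_l; [lra |].
    left. pose proof (Hd1 (v - w)) as Hq. replace (v - (v - w)) with w in Hq by ring.
    apply Hq; [lra | apply J_rb; lra].
  - eapply Rle_trans; [apply (@norm_scal R_AbsRing Y) |].
    change (abs (v - w)) with (Rabs (v - w)). rewrite Rabs_right by lra.
    apply Rmult_le_compat_l; [lra |]. left.
    apply Hd2; [rewrite Rabs_left; lra | split; [apply J_rb |]; lra].
Qed.

Lemma orbit_derivative : (forall u, r <= u <= b -> gen_lim J G u f (A u f)) ->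
  derivative_on_Icc r b (fun v => G r v f) (fun v => G r v (A v f)).
Proof.
  intros G_generates v Hv e.
  destruct (orbit_right_estimate v Hv (G_generates v Hv) e) as [d1 Hd1].
  destruct (orbit_left_estimate v Hv (G_generates v Hv) e) as [d2 Hd2].
  assert (Hd : 0 < Rmin d1 d2) by (apply Rmin_glb_lt; apply cond_pos).
  exists (mkposreal _ Hd). intros w Hw Hwv. simpl in Hwv.
  pose proof (Rmin_l d1 d2). pose proof (Rmin_r d1 d2).
  destruct (Rtotal_order w v) as [Hlt | [-> | Hgt]].
  - rewrite Rabs_left in Hwv |- * by lra.
    rewrite (@increment_swap Y), (@norm_opp R_AbsRing Y).
    replace (- (w - v)) with (v - w) by ring. apply Hd2; lra.
  - rewrite (@increment_diag Y), Rminus_diag, Rabs_R0, Rmult_0_r.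
    apply Req_le, (@norm_zero R_AbsRing Y).
  - rewrite Rabs_right in Hwv |- * by lra. apply Hd1; lra.
Qed.

Lemma is_RInt_orbit_generator (P : Y -> Y) : r <= b -> is_linear P ->
  (forall u, r <= u <= b -> gen_lim J G u f (A u f)) ->
  (forall u, r <= u <= b -> filterlim (fun v => A v f) (within J (locally u)) (locally (A u f))) ->
  is_RInt (fun v => P (G r v (A v f))) r b (minus (P (G r b f)) (P f)).
Proof.
  intros Hrb HP G_generates A_continuous.
  rewrite <- ((proj1 (proj2 G_semigroup)) r f) at 2 by (apply J_rb; lra).
  apply (is_RInt_derivative_on_Icc (fun v => P (G r v f))); [exact Hrb | |].
  - apply continuous_on_Icc_linear; [exact HP | exact (orbit_generator_continuous A_continuous)].
  - apply derivative_on_Icc_linear; [exact HP | exact (orbit_derivative G_generates)].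
Qed.

End SemigroupOrbit.

Section RenewalPath.
Context (T : nat -> R) (N : R -> nat).
Hypothesis HT : renewal_path T N.

Lemma renewal_T_le i j : (i <= j)%nat -> T i <= T j.
Proof.
  destruct HT as [_ [T_incr _]]. induction 1 as [| j _ IH]; [lra |].
  specialize (T_incr j). lra.
Qed.

Lemma renewal_T_lt i j : (i < j)%nat -> T i < T j.
Proof.
  intros Hij. destruct HT as [_ [T_incr _]].
  apply Rlt_le_trans with (T (S i)); [apply T_incr | apply renewal_T_le; lia].
Qed.

Lemma renewal_T_ge0 k : 0 <= T k.
Proof. destruct HT as [T0 _]. rewrite <- T0. apply renewal_T_le. lia. Qed.

Lemma renewal_N_eq r m : 0 <= r -> T m <= r < T (S m) -> N r = m.
Proof.
  intros Hr [Hm HSm]. destruct HT as [_ [_ HN]]. destruct (HN r Hr) as [HNr HSNr].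
  destruct (Nat.lt_total (N r) m) as [Hlt | [Heq | Hgt]]; [| exact Heq |].
  - assert (T (S (N r)) <= T m) by (apply renewal_T_le; lia). lra.
  - assert (T (S m) <= T (N r)) by (apply renewal_T_le; lia). lra.
Qed.

Lemma renewal_N_T m : N (T m) = m.
Proof.
  apply renewal_N_eq; [apply renewal_T_ge0 |]. split; [lra | apply renewal_T_lt; lia].
Qed.

Lemma renewal_N_le r1 r2 : 0 <= r1 -> r1 <= r2 -> (N r1 <= N r2)%nat.
Proof.
  intros H0 H12. destruct HT as [_ [_ HN]].
  destruct (HN r1 H0) as [HN1 _]. destruct (HN r2 ltac:(lra)) as [_ HN2].
  destruct (Nat.le_gt_cases (N r1) (N r2)) as [| Hlt]; [assumption |].
  assert (T (S (N r2)) <= T (N r1)) by (apply renewal_T_le; lia). lra.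
Qed.

Variable s : R.
Hypothesis s_ge0 : 0 <= s.

Lemma T_le_Tk m : T (N s + m)%nat <= Tk T N s m.
Proof.
  destruct m; [| simpl; lra].
  rewrite Nat.add_0_r. destruct HT as [_ [_ HN]]. apply (HN s s_ge0).
Qed.

Lemma Tk_lt m : Tk T N s m < Tk T N s (S m).
Proof.
  destruct m; simpl.
  - destruct HT as [_ [_ HN]]. rewrite Nat.add_1_r. apply (HN s s_ge0).
  - apply renewal_T_lt. lia.
Qed.

Lemma Tk_le i j : (i <= j)%nat -> Tk T N s i <= Tk T N s j.
Proof. induction 1 as [| j _ IH]; [lra |]. pose proof (Tk_lt j). lra. Qed.

Variable eps : R.
Hypothesis eps_pos : 0 < eps.

Lemma Teps_le a b : a <= b <-> Teps eps s a <= Teps eps s b.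
Proof. unfold Teps. split; intros; nra. Qed.

Lemma Teps_lt a b : a < b <-> Teps eps s a < Teps eps s b.
Proof. unfold Teps. split; intros; nra. Qed.

Lemma Teps_inv u : Teps eps s (Teps (/ eps) s u) = u.
Proof. unfold Teps. field. lra. Qed.

Lemma Teps_inv_ge u : s <= u -> s <= Teps (/ eps) s u.
Proof.
  intros H. unfold Teps. assert (0 < / eps) by (apply Rinv_0_lt_compat; lra). nra.
Qed.

Definition rescaled_jump (k : nat) : R := Teps eps s (Tk T N s k).
Definition rescaled_count (u : R) : nat := Nst N s (Teps (/ eps) s u).

Lemma rescaled_jump_lt m : rescaled_jump m < rescaled_jump (S m).
Proof. apply (proj1 (Teps_lt _ _)), Tk_lt. Qed.

Lemma rescaled_jump_le i j : (i <= j)%nat -> rescaled_jump i <= rescaled_jump j.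
Proof. intros Hij. apply (proj1 (Teps_le _ _)), Tk_le, Hij. Qed.

Lemma rescaled_jump_ge m : s <= rescaled_jump m.
Proof.
  replace s with (rescaled_jump 0) at 1 by (unfold rescaled_jump, Teps; simpl; ring).
  apply rescaled_jump_le. lia.
Qed.

Lemma N_rescaled u : s <= u -> (N s + rescaled_count u)%nat = N (Teps (/ eps) s u).
Proof.
  intros H. unfold rescaled_count, Nst.
  pose proof (renewal_N_le s _ s_ge0 (Teps_inv_ge u H)). lia.
Qed.

Lemma rescaled_count_spec u : s <= u ->
  rescaled_jump (rescaled_count u) <= u < rescaled_jump (S (rescaled_count u)).
Proof.
  intros H. pose proof (N_rescaled u H) as HN'. pose proof (Teps_inv_ge u H).
  set (u' := Teps (/ eps) s u) in *. assert (Hu' : 0 <= u') by lra.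
  destruct HT as [_ [_ HN]]. destruct (HN u' Hu') as [H1 H2].
  remember (rescaled_count u) as k.
  rewrite <- (Teps_inv u). fold u'. unfold rescaled_jump. split.
  - apply (proj1 (Teps_le _ _)). destruct k; simpl; [exact H0 | rewrite HN'; exact H1].
  - apply (proj1 (Teps_lt _ _)). simpl. replace (N s + S k)%nat with (S (N u')) by lia.
    exact H2.
Qed.

Lemma rescaled_count_eq u m : rescaled_jump m <= u < rescaled_jump (S m) -> rescaled_count u = m.
Proof.
  intros [H1 H2].
  assert (Hsu : s <= u) by (pose proof (rescaled_jump_ge m); lra).
  pose proof (N_rescaled u Hsu) as HN'. pose proof (Teps_inv_ge u Hsu).
  set (u' := Teps (/ eps) s u) in *. assert (Hu' : 0 <= u') by lra.
  unfold rescaled_jump in H1, H2. rewrite <- (Teps_inv u) in H1, H2. fold u' in H1, H2.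
  apply (proj2 (Teps_le _ _)) in H1. apply (proj2 (Teps_lt _ _)) in H2. simpl in H2.
  pose proof (T_le_Tk m).
  assert (N u' = N s + m)%nat.
  { apply renewal_N_eq; [exact Hu' |]. split; [lra |].
    replace (S (N s + m)) with (N s + S m)%nat by lia. exact H2. }
  lia.
Qed.

Lemma xpath_rescaled {X : Type} (xs : nat -> X) u : s <= u ->
  xpath xs N (Teps (/ eps) s u) = xk xs T N s (rescaled_count u).
Proof.
  intros H. unfold xk, xpath. rewrite <- (N_rescaled u H).
  destruct (rescaled_count u); simpl.
  - now rewrite Nat.add_0_r.
  - now rewrite renewal_N_T.
Qed.

End RenewalPath.

Section Expansion.
Context {Y : CompleteNormedModule R_AbsRing} {X : Type} (J : R -> Prop)
  (G : X -> R -> R -> Y -> Y) (A : X -> R -> Y -> Y) (D : R -> X -> X -> Y -> Y)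
  (xs : nat -> X) (T : nat -> R) (N : R -> nat) (eps s t : R) (f : Y).
Hypothesis HT : renewal_path T N.
Hypothesis s_ge0 : 0 <= s.
Hypothesis s_le_t : s <= t.
Hypothesis eps_pos : 0 < eps.
Hypothesis J_st : forall u, s <= u <= t -> J u.
Hypothesis G_semigroup : forall x, inhom_semigroup J (G x).
Hypothesis G_contraction :
  forall x a b y, J a -> J b -> a <= b -> norm (G x a b y) <= norm y.
Hypothesis D_linear : forall x y, is_linear (D eps x y).
Hypothesis G_generates : forall x u, J u -> gen_lim J (G x) u f (A x u f).
Hypothesis G_continuous : forall x r y u, J r -> J u -> r <= u ->
  filterlim (fun v => G x r v y) (within (fun v => J v /\ r <= v) (locally u))
    (locally (G x r u y)).
Hypothesis A_continuous : forall x u, J u ->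
  filterlim (fun v => A x v f) (within J (locally u)) (locally (A x u f)).

Local Notation tau := (rescaled_jump T N s eps).
Local Notation nu := (rescaled_count N s eps).
Local Notation xk := (xk xs T N s).

Definition Vprefix (m : nat) : Y -> Y := Vprod G D xs T N eps s 0 m (fun z => z).

Lemma Vprod_tail k m tail y :
  Vprod G D xs T N eps s k m tail y = Vprod G D xs T N eps s k m (fun z => z) (tail y).
Proof. revert k. induction m as [| m IH]; intros k; simpl; [reflexivity | now rewrite IH]. Qed.

Lemma Vprod_snoc k m y :
  Vprod G D xs T N eps s k (S m) (fun z => z) y =
  Vprod G D xs T N eps s k m (fun z => z)
    (G (xk (k + m)) (tau (k + m)) (tau (S (k + m))) (D eps (xk (k + m)) (xk (S (k + m))) y)).
Proof.
  revert k. induction m as [| m IH]; intros k.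
  - simpl. now rewrite Nat.add_0_r.
  - remember (S m) as m'. simpl. subst m'. rewrite IH.
    now replace (S k + m)%nat with (k + S m)%nat by lia.
Qed.

Lemma tau_J k : tau k <= t -> J (tau k).
Proof. intros H. apply J_st. split; [apply rescaled_jump_ge |]; assumption. Qed.

Lemma G_tau_linear x k u : tau k <= u <= t -> is_linear (G x (tau k) u).
Proof.
  intros H. apply (proj1 (G_semigroup x)); [apply tau_J | apply J_st |];
    pose proof (rescaled_jump_ge T N HT s s_ge0 eps eps_pos k); lra.
Qed.

Lemma Vprod_linear k m : tau (k + m) <= t -> is_linear (Vprod G D xs T N eps s k m (fun z => z)).
Proof.
  revert k. induction m as [| m IH]; intros k Hk; [apply is_linear_id |].
  pose proof (rescaled_jump_le T N HT s s_ge0 eps eps_pos (S k) (k + S m) ltac:(lia)).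
  pose proof (rescaled_jump_lt T N HT s s_ge0 eps eps_pos k).
  change (is_linear (fun y => G (xk k) (tau k) (tau (S k))
    (D eps (xk k) (xk (S k)) (Vprod G D xs T N eps s (S k) m (fun z => z) y)))).
  apply (is_linear_comp (Vprod G D xs T N eps s (S k) m (fun z => z))
    (fun z => G (xk k) (tau k) (tau (S k)) (D eps (xk k) (xk (S k)) z))).
  - apply IH. now replace (S k + m)%nat with (k + S m)%nat by lia.
  - apply (is_linear_comp (D eps (xk k) (xk (S k))) (G (xk k) (tau k) (tau (S k))));
      [apply D_linear |].
    apply G_tau_linear. lra.
Qed.

Lemma Vprefix_linear m : tau m <= t -> is_linear (Vprefix m).
Proof. apply (Vprod_linear 0). Qed.

Lemma Veps_decomposition u y : s <= u ->
  Veps G D xs T N eps s u y = Vprefix (nu u) (G (xk (nu u)) (tau (nu u)) u y).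
Proof.
  intros H. unfold Veps. cbv zeta. rewrite Vprod_tail.
  rewrite (xpath_rescaled T N HT s s_ge0 eps eps_pos xs u H). reflexivity.
Qed.

Definition integrand (u : R) : Y :=
  Veps G D xs T N eps s u (A (xpath xs N (Teps (/ eps) s u)) u f).

Definition jump_term (k : nat) : Y :=
  Vprefix (k - 1) (G (xk (k - 1)) (tau (k - 1)) (tau k) (minus (D eps (xk (k - 1)) (xk k) f) f)).

Lemma is_RInt_integrand_between_jumps m u : tau m <= u <= tau (S m) -> u <= t ->
  is_RInt integrand (tau m) u (minus (Vprefix m (G (xk m) (tau m) u f)) (Vprefix m f)).
Proof.
  intros Hu Hut.
  pose proof (rescaled_jump_ge T N HT s s_ge0 eps eps_pos m).
  apply is_RInt_ext with (fun v => Vprefix m (G (xk m) (tau m) v (A (xk m) v f))).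
  { intros v Hv. rewrite Rmin_left, Rmax_right in Hv by lra.
    unfold integrand.
    rewrite Veps_decomposition, (xpath_rescaled T N HT s s_ge0 eps eps_pos xs v) by lra.
    now rewrite (rescaled_count_eq T N HT s s_ge0 eps eps_pos v m) by lra. }
  assert (J_m : forall v, tau m <= v <= u -> J v) by (intros v Hv; apply J_st; lra).
  apply (is_RInt_orbit_generator J (G (xk m)) (A (xk m)) (tau m) u f (G_semigroup (xk m)));
    [apply G_contraction | exact J_m | | lra | apply Vprefix_linear; lra | |].
  - intros y v Hv. apply G_continuous; [apply J_m | apply J_m |]; lra.
  - intros v Hv. apply G_generates, J_m, Hv.
  - intros v Hv. apply A_continuous, J_m, Hv.
Qed.

Lemma Veps_left_limit k : (1 <= k)%nat -> tau k <= t ->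
  filterlim (fun u => Veps G D xs T N eps s u (minus (D eps (xk (k - 1)) (xk k) f) f))
    (at_left (tau k)) (locally (jump_term k)).
Proof.
  intros Hk Hkt. destruct k as [| j]; [lia |].
  unfold jump_term. replace (S j - 1)%nat with j by lia.
  set (y := minus (D eps (xk j) (xk (S j)) f) f).
  pose proof (rescaled_jump_lt T N HT s s_ge0 eps eps_pos j).
  pose proof (rescaled_jump_ge T N HT s s_ge0 eps eps_pos j).
  apply filterlim_ext_loc with (fun u => Vprefix j (G (xk j) (tau j) u y)).
  { exists (mkposreal (tau (S j) - tau j) ltac:(lra)). intros u Hu Hlt.
    change (Rabs (u - tau (S j)) < tau (S j) - tau j) in Hu.
    rewrite Rabs_left in Hu by lra.
    rewrite Veps_decomposition by lra.
    now rewrite (rescaled_count_eq T N HT s s_ge0 eps eps_pos u j) by lra. }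
  apply (filterlim_comp _ _ _ (fun u => G (xk j) (tau j) u y) (Vprefix j) _
    (locally (G (xk j) (tau j) (tau (S j)) y))).
  - eapply filterlim_filter_le_1; [| apply G_continuous; [apply tau_J | apply tau_J |]; lra].
    intros P [d HP].
    exists (mkposreal (Rmin d (tau (S j) - tau j)) ltac:(apply Rmin_pos; [apply cond_pos | lra])).
    intros u Hu Hlt. change (Rabs (u - tau (S j)) < Rmin d (tau (S j) - tau j)) in Hu.
    pose proof (Rmin_l d (tau (S j) - tau j)). pose proof (Rmin_r d (tau (S j) - tau j)).
    rewrite Rabs_left in Hu by lra.
    apply HP; [change (Rabs (u - tau (S j)) < d); rewrite Rabs_left; lra |].
    split; [apply J_st |]; lra.
  - apply (@linear_cont R_AbsRing Y Y (Vprefix j)), Vprefix_linear. lra.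
Qed.

Lemma Vprefix_S m : tau (S m) <= t ->
  Vprefix (S m) f = plus (Vprefix m (G (xk m) (tau m) (tau (S m)) f)) (jump_term (S m)).
Proof.
  intros Hm. pose proof (rescaled_jump_lt T N HT s s_ge0 eps eps_pos m).
  unfold jump_term. replace (S m - 1)%nat with m by lia.
  rewrite (linear_minus (G (xk m) (tau m) (tau (S m)))) by (apply G_tau_linear; lra).
  rewrite (linear_minus (Vprefix m)) by (apply Vprefix_linear; lra).
  rewrite (@plus_comm Y), (@plus_minus_r Y). apply Vprod_snoc.
Qed.

Lemma is_RInt_integrand_up_to_jump m : tau m <= t ->
  is_RInt integrand s (tau m) (minus (Vprefix m f) (plus f (sum_n_m jump_term 1 m))).
Proof.
  induction m as [| m IH]; intros Hm.
  - replace (tau 0) with s by (unfold rescaled_jump, Teps; simpl; ring).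
    rewrite sum_n_m_zero by lia. change (Vprefix 0 f) with f.
    rewrite plus_zero_r, minus_eq_zero. apply (is_RInt_point (V := Y)).
  - pose proof (rescaled_jump_lt T N HT s s_ge0 eps eps_pos m).
    pose proof (is_RInt_Chasles _ _ _ _ _ _ (IH ltac:(lra))
      (is_RInt_integrand_between_jumps m (tau (S m)) ltac:(lra) Hm)) as Hc.
    rewrite (@plus_minus_chain Y) in Hc.
    rewrite Vprefix_S, sum_n_Sm, (@plus_assoc Y), (@minus_plus_cancel_r Y) by (lia || lra).
    exact Hc.
Qed.

Lemma is_RInt_integrand :
  is_RInt integrand s t (minus (Veps G D xs T N eps s t f) (plus f (sum_n_m jump_term 1 (nu t)))).
Proof.
  destruct (rescaled_count_spec T N HT s s_ge0 eps eps_pos t s_le_t) as [Hn Hn'].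
  pose proof (is_RInt_Chasles _ _ _ _ _ _ (is_RInt_integrand_up_to_jump (nu t) Hn)
    (is_RInt_integrand_between_jumps (nu t) t ltac:(lra) ltac:(lra))) as Hc.
  rewrite (@plus_minus_chain Y) in Hc. rewrite Veps_decomposition by lra. exact Hc.
Qed.

End Expansion.

Theorem lemma4p10 (Y Y1 : CompleteNormedModule R_AbsRing) (iota : Y1 -> Y)
  (J : R -> Prop) (X : Type)
  (G : X -> R -> R -> Y -> Y) (A : X -> R -> Y -> Y) (D : R -> X -> X -> Y -> Y)
  (xs : nat -> X) (T : nat -> R) (N : R -> nat) :
  separable Y -> separable Y1 -> cont_embedding iota -> time_domain J ->
  (exists l : list X, forall x, In x l) ->
  (forall x, inhom_semigroup J (G x)) ->
  (forall x, is_generator J (G x) (A x)) ->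
  (forall x y f, D 0 x y f = f) ->
  (forall eps x y, 0 < eps <= 1 -> is_linear (D eps x y)) ->
  renewal_path T N ->
  A0 J iota G A D T ->
  forall s t, J s -> J t -> s <= t -> forall (f : Y1) (eps : R), 0 < eps <= 1 ->
  let g := fun u => Veps G D xs T N eps s u
                      (A (xpath xs N (Teps (/ eps) s u)) u (iota f)) in
  let n := Nst N s (Teps (/ eps) s t) in
  ex_RInt g s t /\
  exists L : nat -> Y,
    (forall k, (1 <= k <= n)%nat ->
       filterlim (fun u => Veps G D xs T N eps s u
                    (minus (D eps (xk xs T N s (k - 1)) (xk xs T N s k) (iota f)) (iota f)))
         (at_left (Teps eps s (Tk T N s k))) (locally (L k))) /\
    Veps G D xs T N eps s t (iota f) = plus (iota f) (plus (RInt g s t) (sum_n_m L 1 n)).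
Proof.
  intros _ _ _ HJ _ HG HA _ HD HT HA0 s t Js Jt Hst f eps Heps g n.
  destruct HA0 as [_ [Hreg [HAc [_ [HGc _]]]]].
  assert (s_ge0 : 0 <= s) by (destruct HJ as [H | [Tinf [_ H]]]; apply H in Js; lra).
  assert (J_st : forall u, s <= u <= t -> J u).
  { intros u Hu. destruct HJ as [H | [Tinf [_ H]]]; apply H;
      apply H in Js; [| apply H in Jt]; lra. }
  assert (G_generates : forall x u, J u -> gen_lim J (G x) u (iota f) (A x u (iota f))).
  { intros x u Ju. destruct (proj1 (Hreg x) u f Ju) as [a Ha].
    now rewrite (HA x u (iota f) a Ju Ha). }
  assert (G_continuous := fun x => proj1 (proj2 (proj2 (proj2 (Hreg x))))).
  assert (Hint : is_RInt (integrand G A D xs T N eps s (iota f)) s t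
    (minus (Veps G D xs T N eps s t (iota f))
       (plus (iota f) (sum_n_m (jump_term G D xs T N eps s (iota f)) 1 n))))
    by (apply (is_RInt_integrand J); auto; lra).
  split; [eexists; exact Hint |].
  exists (jump_term G D xs T N eps s (iota f)). split.
  - intros k Hk. apply (Veps_left_limit J) with t; auto; [lra | lia |].
    destruct (rescaled_count_spec T N HT s s_ge0 eps ltac:(lra) t Hst) as [Hn _].
    apply Rle_trans with (rescaled_jump T N s eps n); [| exact Hn].
    apply rescaled_jump_le; [exact HT | exact s_ge0 | lra | lia].
  - change (RInt g s t) with (RInt (integrand G A D xs T N eps s (iota f)) s t).
    rewrite (is_RInt_unique _ _ _ _ Hint). symmetry. apply (@plus_plus_minus Y).
Qed.
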